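(* Let $R$ be a connected reduced order with universal grading $(\Gamma,(R_\gamma)_{\gamma\in\Gamma})$ and degree map $d\colon\mu\to\Gamma$, where $\mu=\mu(R)$. Let $\varphi\colon U^*(d)\to\operatorname{Aut}(d)$ be the homomorphism $1+f\mapsto(\mathrm{id}_\mu+fd,\ \mathrm{id}_\Gamma+df)$, and let $\chi\colon\operatorname{Aut}(R)\to\operatorname{Aut}(d)$ send $\sigma$ to $(\sigma|_\mu,\sigma_\Gamma)$. Then the map $\psi\colon U^*(d)\to\operatorname{Aut}(R)$, sending $1+f$ to the additive map $R\to R$ given by $x\mapsto f(\gamma)\cdot x$ for $x\in R_\gamma$, $\gamma\in\Gamma$, is a well-defined group homomorphism, and $\chi\circ\psi=\varphi$.
   Context: All rings have a unit element. An order is a commutative ring whose additive group is isomorphic to $\mathbb{Z}^n$; it is reduced if it has no non-zero nilpotents and connected if it has exactly two idempotents. $\mu(R)$ is the (finite) group of roots of unity. A grading of $R$ is a pair $(\Delta,(R_\delta)_\delta)$ with $\Delta$ a multiplicatively written abelian group and $R_\delta$ additive subgroups with $R_\gamma R_\delta\subset R_{\gamma\delta}$ and $\bigoplus_\delta R_\delta\to R$ bijective; it is universal if every grading of $R$ is the pushforward $(E,(\sum_{\delta\in f^{-1}\epsilon}R_\delta)_\epsilon)$ along a unique homomorphism $f$ out of its group. Every reduced order has a universal grading with finite group; for connected reduced $R$ every $\zeta\in\mu(R)$ lies in a unique $R_\gamma$ and the degree map $d\colon\mu\to\Gamma$, $\zeta\mapsto\gamma$, is a homomorphism. Each $\sigma\in\operatorname{Aut}(R)$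 induces $\sigma_\Gamma\in\operatorname{Aut}(\Gamma)$ with $\sigma(R_\gamma)=R_{\sigma_\Gamma(\gamma)}$ for all $\gamma$, and $(\sigma|_\mu,\sigma_\Gamma)$ lies in $\operatorname{Aut}(d)$, the group of pairs $(\alpha,\beta)\in\operatorname{Aut}(\mu)\times\operatorname{Aut}(\Gamma)$ with $\beta d=d\alpha$. Hom groups are written additively: for $f\in\operatorname{Hom}(\Gamma,\mu)$, $\mathrm{id}_\mu+fd$ is the map $\zeta\mapsto\zeta\cdot f(d(\zeta))$ and $\mathrm{id}_\Gamma+df$ is $\gamma\mapsto\gamma\cdot d(f(\gamma))$. $Q(d)=\mathbb{Z}\oplus\operatorname{Hom}(\Gamma,\mu)$ is the ring with $(m,f)\star(n,g)=(mn,mg+nf+f\circ d\circ g)$; $U(d)=1+\operatorname{Hom}(\Gamma,\mu)$ and $U^*(d)=U(d)\cap Q(d)^*$, a group under $\star$. *)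

From HB Require Import structures.
From mathcomp Require Import all_boot all_order all_algebra.
Set Implicit Arguments. Unset Strict Implicit. Unset Printing Implicit Defensive.
Import Order.TTheory GRing.Theory Num.Theory.
Local Open Scope ring_scope.

Definition is_order (R : comNzRingType) : Prop :=
  exists (n : nat) (h : R -> 'rV[int]_n),
    (forall x y, h (x - y) = h x - h y) /\ bijective h.

Definition is_reduced (R : comNzRingType) : Prop :=
  forall (x : R) (n : nat), x ^+ n = 0 -> x = 0.

Definition is_connected (R : comNzRingType) : Prop :=
  exists e1 e2 : R, e1 <> e2 /\ forall e : R, e * e = e <-> (e = e1 \/ e = e2).

Definition is_root_of_unity (R : comNzRingType) (z : R) : Prop :=
  exists n : nat, (0 < n)%N /\ z ^+ n = 1.

(* Gradings.  Abelian groups Delta are written additively (zmodType);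
   R_delta are additive subgroups given as predicates. *)
Definition homog_fam (D : zmodType) (R : comNzRingType) (Rd : D -> R -> Prop)
  (c : D -> R) : Prop := forall e, Rd e (c e).

Definition fin_supported (D : zmodType) (R : comNzRingType) (c : D -> R) (s : seq D)
  : Prop := uniq s /\ forall e, e \notin s -> c e = 0.

Definition is_grading (D : zmodType) (R : comNzRingType) (Rd : D -> R -> Prop)
  : Prop :=
  [/\ forall e, Rd e 0,
      forall e x y, Rd e x -> Rd e y -> Rd e (x - y),
      forall a b x y, Rd a x -> Rd b y -> Rd (a + b) (x * y),
      forall x : R, exists (c : D -> R) (s : seq D),
          [/\ homog_fam Rd c, fin_supported c s & x = \sum_(e <- s) c e] &
      forall (c c' : D -> R) (s s' : seq D),
        homog_fam Rd c -> homog_fam Rd c' -> fin_supported c s -> fin_supported c' s' ->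
        \sum_(e <- s) c e = \sum_(e <- s') c' e -> forall e, c e = c' e].

Definition is_hom (A B : zmodType) (f : A -> B) : Prop :=
  forall a b, f (a + b) = f a + f b.

Definition pushforward (G : finZmodType) (D : zmodType) (R : comNzRingType)
  (Rg : G -> R -> Prop) (f : G -> D) (e : D) (x : R) : Prop :=
  exists c : G -> R, homog_fam Rg c /\ x = \sum_(g : G | f g == e) c g.

Definition universal_grading (G : finZmodType) (R : comNzRingType)
  (Rg : G -> R -> Prop) : Prop :=
  is_grading Rg /\
  forall (D : zmodType) (Rd : D -> R -> Prop), is_grading Rd ->
    exists f : G -> D,
      [/\ is_hom f,
          (forall e x, Rd e x <-> pushforward Rg f e x) &
          forall f' : G -> D, is_hom f' ->
            (forall e x, Rd e x <-> pushforward Rg f' e x) ->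
            forall g, f' g = f g].

(* Hom(Gamma, mu): group homomorphisms Gamma -> mu(R), Gamma additive,
   mu multiplicative. Addition in Hom is pointwise multiplication. *)
Definition hom_mu (G : zmodType) (R : comNzRingType) (f : G -> R) : Prop :=
  (forall a b, f (a + b) = f a * f b) /\ forall a, is_root_of_unity (f a).

(* Q(d) = Z (+) Hom(Gamma, mu), elements represented as pairs (m, f).
   (m,f) * (n,g) = (mn, m g + n f + f o d o g); in multiplicative values,
   (m g)(x) = g(m x), sums are pointwise products. *)
Definition qmul (G : zmodType) (R : comNzRingType) (d : R -> G)
  (x y : int * (G -> R)) : int * (G -> R) :=
  (x.1 * y.1, fun g => y.2 (g *~ x.1) * x.2 (g *~ y.1) * x.2 (d (y.2 g))).

Definition qone (G : zmodType) (R : comNzRingType) : int * (G -> R) :=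
  (1, fun _ => 1).

Definition qeq (G : zmodType) (R : comNzRingType) (x y : int * (G -> R)) : Prop :=
  x.1 = y.1 /\ forall g, x.2 g = y.2 g.

Definition in_Q (G : zmodType) (R : comNzRingType) (x : int * (G -> R)) : Prop :=
  hom_mu x.2.

(* 1 + f lies in U^*(d) = U(d) cap Q(d)^* *)
Definition U_star (G : zmodType) (R : comNzRingType) (d : R -> G) (f : G -> R)
  : Prop :=
  hom_mu f /\
  exists y : int * (G -> R), in_Q y /\
    qeq (qmul d (1%:Z, f) y) (qone G R) /\ qeq (qmul d y (1%:Z, f)) (qone G R).

Definition psi_spec (G : zmodType) (R : comNzRingType) (Rg : G -> R -> Prop)
  (f : G -> R) (s : R -> R) : Prop :=
  (forall x y, s (x + y) = s x + s y) /\ forall g x, Rg g x -> s x = f g * x.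

Definition ring_aut (R : comNzRingType) (s : R -> R) : Prop :=
  [/\ forall x y, s (x + y) = s x + s y,
      forall x y, s (x * y) = s x * s y,
      s 1 = 1 & bijective s].

From HB Require Import structures.
From mathcomp Require Import all_boot all_order all_algebra.
From Stdlib Require Import ClassicalEpsilon.
From mathcomp Require Import ring.
Import Order.TTheory GRing.Theory Num.Theory.
Local Open Scope ring_scope.
Set Implicit Arguments. Unset Strict Implicit.

(* Since [Gamma] is finite, every element of [R] is the sum of its homogeneous
   components, so an additive map of [R] is determined by its values on
   homogeneous elements; this makes [psi (1 + f)] well defined and, as [f]
   turns [+] into [*], multiplicative.  A root of unity [f gamma] is
   homogeneous of degree [d (f gamma)], so [psi (1 + f) \o psi (1 + h)]
   multiplies [R_gamma] by the [gamma]-value of [(1 + f) * (1 + h)] in [Q(d)];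
   hence the inverse of [1 + f] in [U^*(d)] yields the inverse automorphism. *)

Lemma root_of_unity_inv (R : comNzRingType) (z : R) :
  is_root_of_unity z -> exists2 u : R, is_root_of_unity u & z * u = 1.
Proof.
move=> [n [n_gt0 zn]]; exists (z ^+ n.-1); last by rewrite -exprS prednK.
by exists n; split; rewrite // -exprM mulnC exprM zn expr1n.
Qed.

Lemma hom_mu0 (G : zmodType) (R : comNzRingType) (f : G -> R) :
  hom_mu f -> f 0 = 1.
Proof.
move=> [fD f_root]; have [u _ f0u] := root_of_unity_inv (f_root 0).
by rewrite -[f 0]mulr1 -f0u mulrA -fD addr0.
Qed.

Lemma sum_single (I : finType) (V : nmodType) (F : I -> V) i0 :
  \sum_i (if i == i0 then F i else 0) = F i0.
Proof. by rewrite -big_mkcond big_pred1_eq. Qed.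

Lemma additive_sum (I : finType) (U V : zmodType) (s : U -> V) (c : I -> U) :
  {morph s : x y / x + y} -> s (\sum_i c i) = \sum_i s (c i).
Proof.
move=> sD; apply: big_morph => //.
by apply: (addrI (s 0)); rewrite addr0 -sD addr0.
Qed.

Lemma qmul_snd_one (G : zmodType) (R : comNzRingType) (d : R -> G) (f h : G -> R) g :
  (qmul d (1%:Z, f) (1%:Z, h)).2 g = h g * f g * f (d (h g)).
Proof. by rewrite /= !mulr1z. Qed.

Lemma U_star_inv (G : zmodType) (R : comNzRingType) (d : R -> G) (f : G -> R) :
  U_star d f ->
  exists2 k : G -> R, hom_mu k &
    qeq (qmul d (1%:Z, f) (1%:Z, k)) (qone G R) /\
    qeq (qmul d (1%:Z, k) (1%:Z, f)) (qone G R).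
Proof.
move=> [_ [[m k] [hom_k [[m_eq1 fk1] kf1]]]].
by rewrite /= mul1r in m_eq1; subst m; exists k.
Qed.

Section Grading.

Variables (R : comNzRingType) (G : finZmodType) (Rg : G -> R -> Prop).
Hypothesis gradingRg : is_grading Rg.

Lemma grading_mulr a b x y : Rg a x -> Rg b y -> Rg (a + b) (x * y).
Proof. by case: gradingRg => _ _ RgM _ _; apply: RgM. Qed.

Lemma grading_addr e x y : Rg e x -> Rg e y -> Rg e (x + y).
Proof.
case: gradingRg => Rg0 RgB _ _ _ Rx Ry.
by have := RgB _ _ _ Rx (RgB _ _ _ (Rg0 e) Ry); rewrite sub0r opprK.
Qed.

Lemma grading_decomp x : exists c : G -> R, homog_fam Rg c /\ x = \sum_e c e.
Proof.
case: gradingRg => _ _ _ Rdecomp _.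
have [c [s [homc [uniq_s supp_c] ->]]] := Rdecomp x.
exists c; split=> //; rewrite big_uniq // [RHS](bigID (mem s)) /=.
by rewrite [X in _ = _ + X]big1 ?addr0 // => e /supp_c.
Qed.

Lemma grading_components_unique (c c' : G -> R) :
  homog_fam Rg c -> homog_fam Rg c' -> \sum_e c e = \sum_e c' e -> c =1 c'.
Proof.
case: gradingRg => _ _ _ _ Runiq homc homc' sum_cc'.
have supp_enum (c0 : G -> R) : fin_supported c0 (enum G).
  by split=> [|e]; rewrite ?enum_uniq ?mem_enum.
by apply: (Runiq c c' (enum G) (enum G)); rewrite ?big_enum.
Qed.

Lemma homog_fam_single g x :
  Rg g x -> homog_fam Rg (fun e => if e == g then x else 0).
Proof. by case: gradingRg => Rg0 _ _ _ _ Rx e; case: eqP => [->|]. Qed.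

Lemma grading_homog_eq0 a b x : Rg a x -> Rg b x -> a != b -> x = 0.
Proof.
move=> Rax Rbx a_neq_b.
have := grading_components_unique (homog_fam_single Rax) (homog_fam_single Rbx).
rewrite (sum_single (fun=> x) a) (sum_single (fun=> x) b) => /(_ erefl a).
by rewrite eqxx (negbTE a_neq_b).
Qed.

Lemma grading_degree1 a : Rg a 1 -> a = 0.
Proof.
move=> Ra1; have Raa1 := grading_mulr Ra1 Ra1; rewrite mulr1 in Raa1.
have [aa_eq_a|aa_neq_a] := eqVneq (a + a) a.
  by apply: (addrI a); rewrite addr0.
by have := grading_homog_eq0 Raa1 Ra1 aa_neq_a => /eqP; rewrite oner_eq0.
Qed.

Lemma eq_additive_on_homog (s t : R -> R) :
  {morph s : x y / x + y} -> {morph t : x y / x + y} ->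
  (forall g x, Rg g x -> s x = t x) -> s =1 t.
Proof.
move=> sD tD eq_st x; have [c [homc ->]] := grading_decomp x.
by rewrite !additive_sum //; apply: eq_bigr => e _; apply: eq_st (homc e).
Qed.

Lemma psi_spec_exists (f : G -> R) : exists s, psi_spec Rg f s.
Proof.
pose comp x := proj1_sig (constructive_indefinite_description _ (grading_decomp x)).
have comp_spec x : homog_fam Rg (comp x) /\ x = \sum_e comp x e.
  exact: proj2_sig (constructive_indefinite_description _ (grading_decomp x)).
have homc x : homog_fam Rg (comp x) by case: (comp_spec x).
have sum_comp x : x = \sum_e comp x e by case: (comp_spec x).
have compD x y : comp (x + y) =1 (fun e => comp x e + comp y e).
  apply: grading_components_unique (homc (x + y)) _ _.
    by move=> e; apply: grading_addr; apply: homc.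
  by rewrite big_split /= -!sum_comp.
have comp_homog g x : Rg g x -> comp x =1 (fun e => if e == g then x else 0).
  move=> Rx; apply: grading_components_unique (homc x) (homog_fam_single Rx) _.
  by rewrite sum_single -sum_comp.
exists (fun x => \sum_e f e * comp x e); split=> [x y|g x Rx].
  by rewrite -big_split; apply: eq_bigr => e _; rewrite compD mulrDr.
rewrite (eq_bigr (fun e => if e == g then f e * x else 0)) ?sum_single //.
by move=> e _; rewrite (comp_homog g x Rx); case: eqP; rewrite ?mulr0.
Qed.

Lemma psi_spec_unique (f : G -> R) (s t : R -> R) :
  psi_spec Rg f s -> psi_spec Rg f t -> s =1 t.
Proof.
move=> [sD s_homog] [tD t_homog]; apply: eq_additive_on_homog => // g x Rx.
by rewrite (s_homog _ _ Rx) (t_homog _ _ Rx).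
Qed.

Lemma eq_psi_spec (f f' : G -> R) (s : R -> R) :
  f =1 f' -> psi_spec Rg f s -> psi_spec Rg f' s.
Proof. by move=> eq_ff' [sD s_homog]; split=> // g x /s_homog ->; rewrite eq_ff'. Qed.

Lemma psi_spec_id : psi_spec Rg (fun=> 1) id.
Proof. by split=> // g x _; rewrite mul1r. Qed.

Lemma psi_specM (f : G -> R) (s : R -> R) :
  {morph f : a b / a + b >-> a * b} -> psi_spec Rg f s -> {morph s : x y / x * y}.
Proof.
move=> fD [sD s_homog].
have s_homogM a x : Rg a x -> forall y, s (x * y) = s x * s y.
  move=> Rx; apply: eq_additive_on_homog => [y z|y z|b y Ry].
  - by rewrite mulrDr sD.
  - by rewrite sD mulrDr.
  rewrite (s_homog _ _ (grading_mulr Rx Ry)) (s_homog _ _ Rx) (s_homog _ _ Ry).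
  by rewrite fD mulrACA.
move=> x y; move: x; apply: eq_additive_on_homog => [x z|x z|a x Rx].
- by rewrite mulrDl sD.
- by rewrite sD mulrDl.
exact: s_homogM Rx y.
Qed.

Variable d : R -> G.
Hypothesis homog_root : forall z : R, is_root_of_unity z -> Rg (d z) z.

Lemma grading_homog1 : Rg 0 1.
Proof.
have root1 : is_root_of_unity (1 : R) by exists 1%N; rewrite expr1.
by have := homog_root root1; rewrite (grading_degree1 (homog_root root1)).
Qed.

Lemma degree_inv (z u : R) :
  is_root_of_unity z -> is_root_of_unity u -> z * u = 1 -> d z + d u = 0.
Proof.
move=> root_z root_u zu1; apply: grading_degree1; rewrite -zu1.
exact: grading_mulr (homog_root root_z) (homog_root root_u).
Qed.

Lemma psi_spec_qmul (f h : G -> R) (sf sh : R -> R) :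
  {morph f : a b / a + b >-> a * b} -> (forall g, is_root_of_unity (h g)) ->
  psi_spec Rg f sf -> psi_spec Rg h sh ->
  psi_spec Rg (qmul d (1%:Z, f) (1%:Z, h)).2 (sf \o sh).
Proof.
move=> fD root_h [sfD sf_homog] [shD sh_homog].
split=> [x y|g x Rx]; first by rewrite /= shD sfD.
have Rhx := grading_mulr (homog_root (root_h g)) Rx.
by rewrite qmul_snd_one /= (sh_homog _ _ Rx) (sf_homog _ _ Rhx) fD; ring.
Qed.

Lemma psi_spec_cancel (f k : G -> R) (sf sk : R -> R) :
  hom_mu f -> hom_mu k -> qeq (qmul d (1%:Z, f) (1%:Z, k)) (qone G R) ->
  psi_spec Rg f sf -> psi_spec Rg k sk -> cancel sk sf.
Proof.
move=> [fD _] [_ root_k] [_ fk1] psi_f psi_k.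
apply: (psi_spec_unique _ psi_spec_id).
exact: eq_psi_spec fk1 (psi_spec_qmul fD root_k psi_f psi_k).
Qed.

Lemma psi_spec_homog_image (f : G -> R) (s : R -> R) g y :
  hom_mu f -> psi_spec Rg f s ->
  Rg (g + d (f g)) y <-> exists x, Rg g x /\ s x = y.
Proof.
move=> [_ root_f] [_ s_homog]; split=> [Ry|[x [Rx <-]]].
  have [u root_u fu1] := root_of_unity_inv (root_f g).
  have Ruy : Rg g (u * y).
    have := grading_mulr (homog_root root_u) Ry.
    by rewrite addrCA [d u + _]addrC (degree_inv (root_f g) root_u fu1) addr0.
  by exists (u * y); rewrite (s_homog _ _ Ruy) mulrA fu1 mul1r.
by rewrite (s_homog _ _ Rx) addrC; apply: grading_mulr (homog_root (root_f g)) Rx.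
Qed.

End Grading.

Unset Implicit Arguments. Set Strict Implicit.

Theorem lemma6p5 (R : comNzRingType) (G : finZmodType)
  (Rg : G -> R -> Prop) (d : R -> G) :
  is_order R -> is_reduced R -> is_connected R -> universal_grading Rg ->
  (forall z : R, is_root_of_unity z -> Rg (d z) z) ->
  [/\ (* psi is well defined: the additive map exists and is unique *)
      (forall f : G -> R, U_star d f ->
         exists s : R -> R, psi_spec Rg f s /\
           forall t : R -> R, psi_spec Rg f t -> forall x, t x = s x),
      (* psi(1+f) lies in Aut(R) *)
      (forall (f : G -> R) (s : R -> R), U_star d f -> psi_spec Rg f s ->
         ring_aut s),
      (* psi is a group homomorphism U^*(d) -> Aut(R) *)
      (forall (f h : G -> R) (sf sh sfh : R -> R),
         U_star d f -> U_star d h -> psi_spec Rg f sf -> psi_spec Rg h sh ->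
         psi_spec Rg (qmul d (1%:Z, f) (1%:Z, h)).2 sfh ->
         forall x, sfh x = sf (sh x)) &
      (* chi o psi = phi *)
      (forall (f : G -> R) (s : R -> R), U_star d f -> psi_spec Rg f s ->
         (forall z : R, is_root_of_unity z -> s z = z * f (d z)) /\
         (forall (g : G) (y : R), Rg (g + d (f g)) y <-> exists x, Rg g x /\ s x = y))].
Proof.
move=> _ _ _ [gradingRg _] homog_root; split.
- move=> f _; have [s psi_s] := psi_spec_exists gradingRg f.
  by exists s; split=> // t psi_t; apply: psi_spec_unique psi_t psi_s.
- move=> f s U_f psi_s; have [k hom_k [fk1 kf1]] := U_star_inv U_f.
  have [sk psi_k] := psi_spec_exists gradingRg k.
  have [[hom_f _] [sD s_homog]] := (U_f, psi_s).
  split=> //; first exact: (psi_specM gradingRg (proj1 hom_f) psi_s).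
    by rewrite (s_homog _ _ (grading_homog1 gradingRg homog_root)) hom_mu0 ?mulr1.
  exists sk; first exact: (psi_spec_cancel gradingRg homog_root hom_k hom_f kf1 psi_k psi_s).
  exact: (psi_spec_cancel gradingRg homog_root hom_f hom_k fk1 psi_s psi_k).
- move=> f h sf sh sfh [[fD _] _] [[_ root_h] _] psi_f psi_h psi_fh.
  exact: psi_spec_unique psi_fh (psi_spec_qmul gradingRg homog_root fD root_h psi_f psi_h).
- move=> f s [hom_f _] psi_s; split=> [z root_z|g y].
    by rewrite (proj2 psi_s _ _ (homog_root _ root_z)) mulrC.
  exact: (psi_spec_homog_image gradingRg homog_root g y hom_f psi_s).
Qed.
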